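(* Let $G$ be a simple graph with edge set $E$ and $t$ triangles, let $\epsilon\in(0,1)$ and $\widetilde{t}>0$. Let $P=(E_0,E_1)$ be any partition of $E$, and assign each triangle to its first edge (according to a fixed arbitrary predefined order on edges) that lies in $E_0$, if such exists; otherwise (all three edges in $E_1$) the triangle is not assigned. For an edge $e$ let $a_P(e)$ be the number of triangles assigned to $e$. Then $\sum_{e\in E}a_P(e)\le t$. Furthermore, if $|E_1|\le 3(\epsilon\widetilde{t})^{2/3}$ and $\widetilde{t}\in[t/4,t]$, then $\sum_{e\in E_0}a_P(e)\ge(1-12\epsilon)t$. *)

From HB Require Import structures.
From mathcomp Require Import all_boot all_order all_algebra.
From mathcomp Require Import all_classical all_reals all_analysis.
Set Implicit Arguments. Unset Strict Implicit. Unset Printing Implicit Defensive.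
Import Order.TTheory GRing.Theory Num.Theory.

Section Graph.
Variable (V : finType) (adj : rel V).

Definition edge_set : {set {set V}} :=
  [set f : {set V} | [exists x, exists y, (x != y) && adj x y && (f == [set x; y])]].

Definition triangles : {set {set V}} :=
  [set D : {set V} | (#|D| == 3) &&
     [forall x in D, forall y in D, (x != y) ==> adj x y]].

Definition edges_of (D : {set V}) : {set {set V}} :=
  [set f : {set V} | (f \subset D) && (#|f| == 2)].

(* Triangle D is assigned to edge e (w.r.t. partition part E0 and ranking r
   encoding the fixed order on edges): e is an edge of D lying in E0 and it is
   the first (smallest rank) among the edges of D lying in E0. *)
Definition assigned (E0 : {set {set V}}) (r : {set V} -> nat)
  (D e : {set V}) : bool :=
  [&& e \in edges_of D, e \in E0 &
      [forall f in edges_of D, (f \in E0) ==> (r e <= r f)%N]].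

Definition aP (E0 : {set {set V}}) (r : {set V} -> nat) (e : {set V}) : nat :=
  #|[set D in triangles | assigned E0 r D e]|.

End Graph.

(* Each triangle is assigned to at most one edge, whence the first bound.  A
   triangle assigned to no edge of E0 has all three edges in E1, so it suffices
   to bound the number T of triangles spanned by E1.  A vertex of E1-degree d
   lies in at most min(m, d^2) of them, where m = |E1|, and
   min(m, d^2) <= d (y + m / y) for every y > 0.  Summing over the vertices
   counts each triangle three times and each edge twice, so
   3 T <= 2 m (y + m / y), which is at most 24 y^3 when m <= 3 y^2.  With
   y^3 = eps tt <= eps t this gives T <= 8 eps t. *)
From HB Require Import structures.
From mathcomp Require Import all_boot all_order all_algebra.
From mathcomp Require Import all_classical all_reals all_analysis.
From mathcomp Require Import lra.
Import Order.TTheory GRing.Theory Num.Theory.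

Set Implicit Arguments. Unset Strict Implicit. Unset Printing Implicit Defensive.

Section RealInequalities.
Local Open Scope ring_scope.

Lemma le_min_mul_add_div (R : realFieldType) (c d m y : R) :
  0 < y -> 0 <= d -> 0 <= m -> c <= m -> c <= d ^+ 2 -> c <= d * (y + m / y).
Proof.
move=> y0 d0 m0 cm cd; have my0 : 0 <= m / y by rewrite divr_ge0 // ltW.
case: (leP d y) => [dy | yd].
- apply: (le_trans cd); rewrite expr2 ler_wpM2l //.
  by apply: (le_trans dy); rewrite lerDl.
- apply: (le_trans cm); rewrite -{1}(divfK (lt0r_neq0 y0) m) mulrC.
  apply: (@le_trans _ _ (d * (m / y))); first by rewrite ler_wpM2r // ltW.
  by rewrite ler_wpM2l // lerDr ltW.
Qed.

Lemma powR_inv3_cube (R : realType) (x : R) : 0 <= x -> (x `^ 3^-1) ^+ 3 = x.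
Proof. by move=> x0; rewrite -powR_mulrn ?powR_ge0 // -powRrM mulVf // powRr1. Qed.

Lemma powR_two_thirds (R : realType) (x : R) :
  0 <= x -> x `^ (2 / 3) = (x `^ 3^-1) ^+ 2.
Proof. by move=> x0; rewrite -powR_mulrn ?powR_ge0 // -powRrM mulrC. Qed.

End RealInequalities.

Lemma card_setIdE (T : finType) (A : {set T}) (P : pred T) :
  #|[set x in A | P x]| = \sum_(x in A) P x.
Proof.
rewrite -sum1dep_card big_mkcondr /=.
by apply: eq_bigr => x _; case: (P x).
Qed.

Lemma sum_card_incident (T : finType) (F : {set {set T}}) :
  \sum_v #|[set S in F | v \in S]| = \sum_(S in F) #|S|.
Proof.
under eq_bigr => v _ do rewrite card_setIdE.
rewrite exchange_big /=; apply: eq_bigr => S _.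
rewrite -sum1_card [RHS]big_mkcond.
by apply: eq_bigr => v _; case: (v \in S).
Qed.

Lemma sum_card_incident_uniform (T : finType) (F : {set {set T}}) k :
  {in F, forall S : {set T}, #|S| = k} -> \sum_v #|[set S in F | v \in S]| = k * #|F|.
Proof.
move=> cardF; rewrite sum_card_incident mulnC -sum_nat_const.
exact: eq_bigr.
Qed.

Section Triangles.
Variables (V : finType) (adj : rel V).

Lemma edge_set_card e : e \in edge_set adj -> #|e| = 2.
Proof.
by rewrite inE => /existsP[x /existsP[y /andP[/andP[xy _] /eqP ->]]]; rewrite cards2 xy.
Qed.

Lemma triangle_card D : D \in triangles adj -> #|D| = 3.
Proof. by rewrite inE => /andP[/eqP]. Qed.

Lemma triangle_edges_sub D : D \in triangles adj -> edges_of D \subset edge_set adj.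
Proof.
rewrite inE => /andP[_ /forall_inP adjD]; apply/fintype.subsetP => f.
rewrite inE => /andP[sfD /cards2P[x [y [xy fE]]]]; subst f.
have xD : x \in D by apply: (fintype.subsetP sfD); rewrite set21.
have yD : y \in D by apply: (fintype.subsetP sfD); rewrite set22.
rewrite inE; apply/existsP; exists x; apply/existsP; exists y; rewrite xy eqxx andbT /=.
by move/forall_inP/(_ y yD)/implyP/(_ xy): (adjD x xD).
Qed.

Lemma triangle_setD1_card D v : D \in triangles adj -> v \in D -> #|D :\ v| = 2.
Proof. by move=> /triangle_card cardD vD; move: (cardsD1 v D); rewrite vD cardD => -[]. Qed.

Definition triangles_in (F : {set {set V}}) : {set {set V}} :=
  [set D in triangles adj | edges_of D \subset F].

Lemma mem_triangles_in F D :
  (D \in triangles_in F) = (D \in triangles adj) && (edges_of D \subset F).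
Proof. by rewrite inE. Qed.

Section Assignment.
Variables (E0 : {set {set V}}) (r : {set V} -> nat).
Hypothesis r_inj : {in edge_set adj &, injective r}.

Lemma assigned_uniq D e f :
  D \in triangles adj -> assigned E0 r D e -> assigned E0 r D f -> e = f.
Proof.
move=> /triangle_edges_sub sDE /and3P[eD e0 /forall_inP le_e] /and3P[fD f0 /forall_inP le_f].
apply: r_inj; [exact: (fintype.subsetP sDE) | exact: (fintype.subsetP sDE) |].
by apply/eqP; rewrite eqn_leq (implyP (le_e f fD) f0) (implyP (le_f e eD) e0).
Qed.

Lemma assigned_exists D f :
  f \in edges_of D -> f \in E0 -> exists e, assigned E0 r D e.
Proof.
move=> fD f0; have Pf : f \in [pred g | (g \in edges_of D) && (g \in E0)] by rewrite inE fD f0.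
case: (arg_minnP r Pf) => e /andP[eD e0] min_e; exists e.
rewrite /assigned eD e0; apply/forall_inP => g gD; apply/implyP => g0.
by apply: min_e; apply/andP.
Qed.

Lemma card_assigned_le1 (S : {set {set V}}) D :
  D \in triangles adj -> #|[set e in S | assigned E0 r D e]| <= 1.
Proof.
move=> Dt; apply/card_le1_eqP => e f; rewrite !inE => /andP[_ De] /andP[_ Df].
exact: assigned_uniq Dt Df De.
Qed.

Lemma sum_aP_exchange (S : {set {set V}}) :
  \sum_(e in S) aP adj E0 r e =
  \sum_(D in triangles adj) #|[set e in S | assigned E0 r D e]|.
Proof.
under eq_bigr do rewrite /aP card_setIdE.
by rewrite exchange_big; apply: eq_bigr => D _; rewrite card_setIdE.
Qed.

Lemma sum_aP_le_triangles (S : {set {set V}}) :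
  \sum_(e in S) aP adj E0 r e <= #|triangles adj|.
Proof.
rewrite sum_aP_exchange -sum1_card; apply: leq_sum => D.
exact: card_assigned_le1.
Qed.

Lemma triangles_le_sum_aP (E1 : {set {set V}}) :
  E0 :|: E1 = edge_set adj ->
  #|triangles adj| <= #|triangles_in E1| + \sum_(e in E0) aP adj E0 r e.
Proof.
move=> E01; rewrite sum_aP_exchange card_setIdE -big_split -sum1_card /=.
apply: leq_sum => D Dt; case: (boolP (edges_of D \subset E1)) => [//| /subsetPn[f fD fE1]].
have /(fintype.subsetP (triangle_edges_sub Dt)) := fD.
rewrite -E01 inE (negbTE fE1) orbF => f0.
have [e De] := assigned_exists fD f0.
by apply/card_gt0P; exists e; rewrite inE De andbT; case/and3P: De.
Qed.

End Assignment.

Section TrianglesInEdgeSet.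
Variables (E1 : {set {set V}}) (v : V).

Let Tv := [set D in triangles_in E1 | v \in D].
Let Ev := [set e in E1 | v \in e].

Lemma card_triangles_at_le_edges : #|Tv| <= #|E1|.
Proof.
have inj : {in Tv &, injective (fun D => D :\ v)}.
  move=> D1 D2; rewrite !inE => /andP[_ v1] /andP[_ v2] eqD.
  by rewrite -(finset.setD1K v1) -(finset.setD1K v2) eqD.
rewrite -(card_in_imset inj); apply/subset_leq_card/fintype.subsetP => e.
case/imsetP=> D; rewrite inE mem_triangles_in => /andP[/andP[Dt sE] vD] ->.
by apply: (fintype.subsetP sE); rewrite inE subD1set triangle_setD1_card.
Qed.

Lemma card_triangles_at_le_deg_sq : #|Tv| <= #|Ev| ^ 2.
Proof.
apply: (@leq_trans #|[set e :|: f | e in Ev, f in Ev]|); last first.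
  by rewrite curry_imset2X (leq_trans (leq_imset_card _ _)) // cardsX.
apply/subset_leq_card/fintype.subsetP => D; rewrite inE mem_triangles_in => /andP[/andP[Dt sE] vD].
have /eqP/cards2P[a [b [ab Dab]]] := triangle_setD1_card Dt vD.
have spoke z : z \in D :\ v -> [set v; z] \in Ev.
  move=> /setD1P[zv zD]; rewrite inE set21 andbT; apply: (fintype.subsetP sE).
  by rewrite inE cards2 (eq_sym v z) zv finset.subUset !finset.sub1set vD zD.
apply/imset2P; exists [set v; a] [set v; b]; rewrite ?spoke ?Dab ?set21 ?set22 //.
rewrite -(finset.setD1K vD) Dab; apply/setP => w; rewrite !inE.
by case: (w == v); case: (w == a); case: (w == b).
Qed.

End TrianglesInEdgeSet.

Local Open Scope ring_scope.

Lemma triangles_in_double_count (R : realFieldType) (E1 : {set {set V}}) (y : R) :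
  E1 \subset edge_set adj -> 0 < y ->
  3 * #|triangles_in E1|%:R <= 2 * #|E1|%:R * (y + #|E1|%:R / y).
Proof.
move=> sE1 y0.
have tri3 : {in triangles_in E1, forall D : {set V}, #|D| = 3}.
  by move=> D; rewrite inE => /andP[/triangle_card].
have edge2 : {in E1, forall e : {set V}, #|e| = 2}.
  by move=> e /(fintype.subsetP sE1)/edge_set_card.
rewrite -[3]/(3%:R) -[2]/(2%:R) -!natrM -(sum_card_incident_uniform tri3).
rewrite -(sum_card_incident_uniform edge2) !natr_sum mulr_suml.
apply: ler_sum => v _; apply: le_min_mul_add_div; rewrite ?ler_nat //.
  exact: card_triangles_at_le_edges.
by rewrite -natrX ler_nat card_triangles_at_le_deg_sq.
Qed.

Lemma card_triangles_in_le (R : realFieldType) (E1 : {set {set V}}) (y : R) :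
  E1 \subset edge_set adj -> 0 < y -> #|E1|%:R <= 3 * y ^+ 2 ->
  #|triangles_in E1|%:R <= 8 * y ^+ 3.
Proof.
move=> sE1 y0 mE1; have := triangles_in_double_count sE1 y0.
set m := #|E1|%:R; have m0 : 0 <= m by [].
have my : m / y <= 3 * y by rewrite ler_pdivrMr // -mulrA -expr2.
nra.
Qed.

End Triangles.

Local Open Scope ring_scope.

Theorem claim3p5 (R : realType) (V : finType) (adj : rel V)
  (adj_sym : symmetric adj) (adj_irr : irreflexive adj)
  (eps tt : R) (heps0 : 0 < eps) (heps1 : eps < 1) (htt : 0 < tt)
  (E0 E1 : {set {set V}})
  (hpart : E0 :|: E1 = edge_set adj) (hdisj : [disjoint E0 & E1])
  (r : {set V} -> nat) (hr : {in edge_set adj &, injective r}) :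
  let t := #|triangles adj| in
  (\sum_(e in edge_set adj) aP adj E0 r e <= t)%N /\
  ((#|E1|%:R <= 3 * (eps * tt) `^ (2 / 3 : R) ->
    t%:R / 4 <= tt -> tt <= t%:R ->
    (1 - 12 * eps) * t%:R <= (\sum_(e in E0) aP adj E0 r e)%:R)).
Proof.
move=> t; split; first exact: sum_aP_le_triangles.
move=> hE1 _ tt_le_t.
have x0 : 0 <= eps * tt by rewrite mulr_ge0 ?ltW.
have y0 : 0 < (eps * tt) `^ 3^-1 by rewrite powR_gt0 ?mulr_gt0.
have sE1 : E1 \subset edge_set adj by rewrite -hpart finset.subsetUr.
have := card_triangles_in_le sE1 y0; rewrite -powR_two_thirds // powR_inv3_cube //.
move=> /(_ hE1) T1_le.
have := triangles_le_sum_aP r hpart; rewrite -(ler_nat R) natrD -/t => t_le.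
have : eps * tt <= eps * t%:R by rewrite ler_pM2l.
lra.
Qed.
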